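(* Let $I=(G,t,t^* )$ be a boosted instance and $B=(q,\tau)$ a boost action with $\tau\ge t^*_q$. Let $\tau_0\ge0$ and let $S$ be an active component at time $\tau_0$ in shadow moat growing on the boosted fingerprint of $\mathrm{WithBoost}(I,B)$. If $q\notin S$ or $\tau\le\tau_0$, then there is an active component $S'$ at time $\tau_0$ in shadow moat growing on $(G,t^* )$ (the run for $I$) with $S'\subseteq S$.
   Context: $G=(V,E,c)$ is an undirected graph with edge costs $c\ge0$; $\delta(S)$ denotes the edges with exactly one endpoint in $S$. Shadow moat growing on $(G,s)$, for $s:V\to\mathbb{R}_{\ge0}$: continuous process in time maintaining a forest (initially empty), its components, and $y_S\ge0$ (initially $0$); at time $\tau$ a component $C$ is active iff some $w\in C$ has $s_w>\tau$, and each active $C$ increases $y_C$ at rate $1$; an edge $e$ between different components with $\sum_{S:e\in\delta(S)}y_S=c_e$ is added and the components merge (ties processed by a fixed rule); stop when nothing is active. A boosted instance is $I=(G,t,t^* )$ with $t,t^*:V\to\mathbb{R}_{\ge0}$ and $t^*\ge t$ pointwise; the run for $I$ is shadow moat growing on $(G,t^* )$. A boost action $B=(q,\tau)$, $\tau\ge t^*_q$, yields $\mathrm{WithBoost}(I,B)=(G,t,t^{*\prime})$ with $t^{*\prime}_q=\tau$ and $t^{*\prime}_v=t^*_v$ for $v\ne q$. *)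

(* Shadow moat growing, formalized as a relational
   characterization of a (discrete) event run of the continuous process. *)
From HB Require Import structures.
From mathcomp Require Import all_boot all_order all_algebra.
Set Implicit Arguments. Unset Strict Implicit. Unset Printing Implicit Defensive.
Import Order.TTheory GRing.Theory Num.Theory.
Local Open Scope ring_scope.

Section MoatDefs.
Variables (R : realFieldType) (V E : finType) (ends : E -> V * V).

Definition adj (F : seq E) : rel V := fun x y =>
  has (fun e => (((ends e).1 == x) && ((ends e).2 == y)) ||
                (((ends e).1 == y) && ((ends e).2 == x))) F.

Definition comp_of (F : seq E) (v : V) : {set V} := [set u | connect (adj F) v u].

Definition is_comp (F : seq E) (S : {set V}) : bool := [exists v, S == comp_of F v].

Definition crosses (e : E) (S : {set V}) : bool :=
  ((ends e).1 \in S) != ((ends e).2 \in S).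

(* A run is a list of (edge, time) pairs, in the order in which the edges
   are added (ties processed in list order). The forest at time sigma
   consists of the edges added at times <= sigma. *)
Definition forest_at (r : seq (E * R)) (sigma : R) : seq E :=
  [seq p.1 | p <- r & p.2 <= sigma].

(* max of s over S (s >= 0, so 0 as neutral element is harmless):
   a component S is active at time sigma iff sigma < smax s S. *)
Definition smax (s : V -> R) (S : {set V}) : R := \big[Num.max/0]_(w in S) s w.

Definition active_comp (s : V -> R) (r : seq (E * R)) (tau : R) (S : {set V}) : Prop :=
  is_comp (forest_at r tau) S /\ exists2 w, w \in S & tau < s w.

(* y_S at time tau = Lebesgue measure of
   { sigma in [0, tau) | S is an active component at time sigma },
   written out over the breakpoints 0 = a_0, a_1 <= ... <= a_k (event times)
   and a_{k+1} = +oo: on [a_j, a_{j+1}) the forest is forest_at r a_j. *)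
Definition ymoat (s : V -> R) (r : seq (E * R)) (S : {set V}) (tau : R) : R :=
  let bp := 0 :: [seq p.2 | p <- r] in
  \sum_(j < (size r).+1)
    (let lo := nth 0 bp j in
     let hi0 := Num.min tau (smax s S) in
     let hi := if (j.+1 < (size r).+1)%N then Num.min hi0 (nth 0 bp j.+1) else hi0 in
     if is_comp (forest_at r lo) S then Num.max 0 (hi - lo) else 0).

Definition load (s : V -> R) (r : seq (E * R)) (e : E) (tau : R) : R :=
  \sum_(S : {set V} | crosses e S) ymoat s r S tau.

Definition moat_run (c : E -> R) (s : V -> R) (r : seq (E * R)) : Prop :=
  [/\
      path <=%R 0 [seq p.2 | p <- r],
      (forall r1 e tau_e r2, r = r1 ++ (e, tau_e) :: r2 ->
          ~~ connect (adj [seq p.1 | p <- r1]) (ends e).1 (ends e).2 /\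
          load s r e tau_e = c e)
    & (* while something is active, every edge between different components
         (after processing all events up to sigma) is strictly non-tight *)
      (forall sigma, 0 <= sigma -> (exists w, sigma < s w) ->
          forall e, ~~ connect (adj (forest_at r sigma)) (ends e).1 (ends e).2 ->
          load s r e sigma < c e)].

Definition withBoost (tstar : V -> R) (q : V) (tau : R) : V -> R :=
  fun v => if v == q then tau else tstar v.

End MoatDefs.

From HB Require Import structures.
From mathcomp Require Import all_boot all_order all_algebra.
From mathcomp Require Import lra.
Import Order.TTheory GRing.Theory Num.Theory.
Local Open Scope ring_scope.
Set Implicit Arguments. Unset Strict Implicit. Unset Printing Implicit Defensive.

(* Each y_S is the measure of the set of times at which S is an active
   component, so the load of an edge is the time integral of the number of
   active components crossing it. Induct along the original run: if all
   earlier edges are already connected in the boosted forest at their own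
   times, every original component lies in a boosted component, active
   whenever the original one is, since boosting only raises thresholds. If
   the next original edge e, added at time t_e while some vertex is still
   active, had its endpoints in different boosted components at t_e, these
   would be two distinct boosted components crossing e, so the boosted load of
   e would be at least its original load c_e; yet the boosted run is still
   active, so that load is below c_e. Hence the original forest at tau_0
   refines the boosted one, and the original component of an active vertex of
   S (not q, unless tau <= tau_0) is the required S'. *)

Section RiemannSums.
Variable R : realFieldType.
Implicit Types (e : seq R) (f g h : R -> R) (a b x : R).

Definition ind (P : bool) : R := if P then 1 else 0.

Lemma ind_ge0 P : 0 <= ind P.
Proof. by case: P; rewrite /ind. Qed.

Lemma ler_ind (P Q : bool) : (P -> Q) -> ind P <= ind Q.
Proof. by case: P; case: Q => // /(_ isT). Qed.

Fixpoint left_riemann_sum e h : R :=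
  match e with
  | x :: ((y :: _) as e') => (y - x) * h x + left_riemann_sum e' h
  | _ => 0
  end.

Lemma riemann_sum_cons2 x y e h : left_riemann_sum [:: x, y & e] h =
  (y - x) * h x + left_riemann_sum (y :: e) h.
Proof. by []. Qed.

Lemma eq_riemann_sum e f g : {in e, f =1 g} ->
  left_riemann_sum e f = left_riemann_sum e g.
Proof.
case: e => [|x e] //; elim: e x => [|y e IH] x // efg.
rewrite !riemann_sum_cons2 efg ?mem_head // IH // => z ez.
by rewrite efg // inE ez orbT.
Qed.

Lemma riemann_sum0 e : left_riemann_sum e (fun=> 0) = 0.
Proof.
case: e => [|x e] //; elim: e x => [|y e IH] x //.
by rewrite riemann_sum_cons2 IH mulr0 addr0.
Qed.

Lemma riemann_sumB e f g :
  left_riemann_sum e (fun x => f x - g x) =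
  left_riemann_sum e f - left_riemann_sum e g.
Proof.
case: e => [|x e]; first by rewrite subr0.
elim: e x => [|y e IH] x; first by rewrite /= subr0.
by rewrite !riemann_sum_cons2 IH mulrBr addrACA opprD.
Qed.

Lemma riemann_sum_big (I : Type) (r : seq I) e (h : I -> R -> R) :
  left_riemann_sum e (fun x => \sum_(i <- r) h i x) =
  \sum_(i <- r) left_riemann_sum e (h i).
Proof.
case: e => [|x e]; first by rewrite big1.
elim: e x => [|y e IH] x; first by rewrite /= big1.
by rewrite !riemann_sum_cons2 IH big_split mulr_sumr.
Qed.

Lemma ler_riemann_sum e f g : sorted <=%R e -> (forall x, f x <= g x) ->
  left_riemann_sum e f <= left_riemann_sum e g.
Proof.
move=> + fg; case: e => [|x e] //; elim: e x => [|y e IH] x // /andP[xy ye].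
by rewrite !riemann_sum_cons2 lerD ?IH // ler_wpM2l ?subr_ge0.
Qed.

Lemma riemann_sum_ind_lt x0 e b : path <=%R x0 e -> b \in x0 :: e ->
  left_riemann_sum (x0 :: e) (fun x => ind (x < b)) = b - x0.
Proof.
elim: e x0 => [|y e IH] x0 x0e; first by rewrite inE => /eqP ->; rewrite subrr.
have /allP ge_x0 := order_path_min le_trans x0e.
case/andP: x0e => _ ye; rewrite riemann_sum_cons2.
case: (eqVneq b x0) => [-> _|neq_bx0].
  rewrite /ind ltxx mulr0 add0r subrr -[RHS](riemann_sum0 (y :: e)).
  by apply: eq_riemann_sum => z /ge_x0; rewrite ltNge => ->.
rewrite inE (negbTE neq_bx0) orFb => b_in; rewrite IH //.
have -> : x0 < b by rewrite lt_neqAle eq_sym neq_bx0 ge_x0.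
by rewrite /ind mulr1 addrC addrA subrK.
Qed.

Definition ilen (ab : R * R) : R := Num.max 0 (ab.2 - ab.1).

Definition covers (ab : R * R) x : bool := (ab.1 <= x) && (x < ab.2).

Lemma riemann_sum_covers e a b : sorted <=%R e -> a \in e -> b \in e ->
  left_riemann_sum e (fun x => ind (covers (a, b) x)) = ilen (a, b).
Proof.
case: e => [|x0 e] // e_sorted ae be.
rewrite /ilen /covers [(a, b).1]/= [(a, b).2]/=.
case: (leP a b) => [le_ab|lt_ba]; last first.
  rewrite max_l ?subr_le0 ?ltW // -(riemann_sum0 (x0 :: e)).
  apply: eq_riemann_sum => x _; rewrite /ind.
  by case: (leP a x) => ? //; case: (ltP x b) => ? //; lra.
rewrite max_r ?subr_ge0 //.
rewrite (@eq_riemann_sum _ _ (fun x => ind (x < b) - ind (x < a))); last first.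
  move=> x _; rewrite /ind.
  by case: (leP a x) => ?; case: (ltP x b) => ?; case: (ltP x a) => ? /=; lra.
by rewrite riemann_sumB !riemann_sum_ind_lt // opprB addrA subrK.
Qed.

(* Integrating the pointwise inequality over the common breakpoints. *)
Lemma ler_sum_ilen (I J : finType) (f : I -> R * R) (g : J -> R * R) :
  (forall x, \sum_i ind (covers (f i) x) <= \sum_j ind (covers (g j) x)) ->
  \sum_i ilen (f i) <= \sum_j ilen (g j).
Proof.
move=> cover_fg.
pose pts_f := [seq (f i).1 | i <- enum I] ++ [seq (f i).2 | i <- enum I].
pose pts_g := [seq (g j).1 | j <- enum J] ++ [seq (g j).2 | j <- enum J].
pose e := sort <=%R (pts_f ++ pts_g).
have e_sorted : sorted <=%R e by apply: sort_sorted; exact: le_total.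
have in_enum (T : finType) (k : T -> R) i : k i \in [seq k j | j <- enum T].
  by rewrite map_f ?mem_enum.
have in_f i : ((f i).1 \in e) && ((f i).2 \in e).
  by rewrite !mem_sort !mem_cat (in_enum _ (fun i => (f i).1))
             (in_enum _ (fun i => (f i).2)) orbT.
have in_g j : ((g j).1 \in e) && ((g j).2 \in e).
  by rewrite !mem_sort !mem_cat (in_enum _ (fun j => (g j).1))
             (in_enum _ (fun j => (g j).2)) !orbT.
rewrite (eq_bigr (fun i => left_riemann_sum e (fun x => ind (covers (f i) x)))); last first.
  by move=> i _; case/andP: (in_f i) => *; rewrite [f i]surjective_pairing riemann_sum_covers.
rewrite [X in _ <= X](eq_bigr (fun j =>
    left_riemann_sum e (fun x => ind (covers (g j) x)))); last first.
  by move=> j _; case/andP: (in_g j) => *; rewrite [g j]surjective_pairing riemann_sum_covers.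
by rewrite -!riemann_sum_big; apply: ler_riemann_sum.
Qed.

End RiemannSums.

Section LoadAsLength.
Variables (R : realFieldType) (V E : finType) (ends : E -> V * V).
Implicit Types (s : V -> R) (r : seq (E * R)) (S : {set V}) (x : R).

Local Notation ind := (@ind R).
Local Notation breakpoints r := (0 :: [seq p.2 | p <- r]).

Definition in_piece (b : seq R) j x :=
  (nth 0 b j <= x) && ((j.+1 < size b)%N ==> (x < nth 0 b j.+1)).

Lemma sum_ind_in_piece b0 ts x : path <=%R b0 ts ->
  \sum_(0 <= j < size (b0 :: ts)) ind (in_piece (b0 :: ts) j x) = ind (b0 <= x).
Proof.
elim: ts b0 => [|b1 ts IH] b0; first by rewrite /= big_nat1 /in_piece /= andbT.
case/andP=> le_b01 b1ts; rewrite big_nat_recl //= -/(size (b1 :: ts)) IH //.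
by rewrite /in_piece /ind /=; case: (leP b0 x) => ?; case: (ltP x b1) => ? /=; lra.
Qed.

Lemma breakpoint_ge0 r y : path <=%R 0 [seq p.2 | p <- r] ->
  y \in breakpoints r -> 0 <= y.
Proof.
move=> /(order_path_min le_trans)/allP ge0; rewrite inE.
by case/orP=> [/eqP->|/ge0].
Qed.

Lemma forest_at_piece r j x : path <=%R 0 [seq p.2 | p <- r] ->
  (j < (size r).+1)%N -> in_piece (breakpoints r) j x ->
  forest_at r (nth 0 (breakpoints r) j) = forest_at r x.
Proof.
set bp := breakpoints r => bp_sorted lt_j /andP[lo_x x_hi].
have {}lt_j : (j < size bp)%N by rewrite /= size_map.
rewrite /forest_at; congr map; apply: eq_in_filter => p pr.
have p_bp : p.2 \in bp by rewrite inE map_f ?orbT.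
have lt_i : (index p.2 bp < size bp)%N by rewrite index_mem.
have nth_i : nth 0 bp (index p.2 bp) = p.2 by rewrite nth_index.
have le_nth i k : (i < size bp)%N -> (k < size bp)%N -> (i <= k)%N ->
    nth 0 bp i <= nth 0 bp k by exact: le_sorted_leq_nth.
case: (leqP (index p.2 bp) j) => [le_ij|lt_ji].
  have le_p : p.2 <= nth 0 bp j by rewrite -nth_i; exact: le_nth.
  by rewrite le_p (le_trans le_p lo_x).
have lt_j1 : (j.+1 < size bp)%N by apply: leq_ltn_trans lt_ji lt_i.
rewrite lt_j1 /= in x_hi.
have lt_xp : x < p.2.
  by rewrite -nth_i; apply: lt_le_trans x_hi (le_nth _ _ lt_j1 lt_i lt_ji).
by rewrite !leNgt lt_xp (le_lt_trans lo_x lt_xp).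
Qed.

(* The [j]-th summand of [ymoat s r S sg] is the length of this interval; the
   intervals of the components crossing [e] add up to [load]. *)
Definition load_interval s r e sg (p : {set V} * 'I_(size r).+1) : R * R :=
  let S := p.1 in let j := nat_of_ord p.2 in
  let lo := nth 0 (breakpoints r) j in
  let hi0 := Num.min sg (smax s S) in
  let hi := if (j.+1 < (size r).+1)%N
            then Num.min hi0 (nth 0 (breakpoints r) j.+1) else hi0 in
  if crosses ends e S && is_comp ends (forest_at r lo) S then (lo, hi) else (0, 0).
Arguments load_interval : clear implicits.

Lemma load_sum_ilen s r e sg :
  load ends s r e sg = \sum_p ilen (load_interval s r e sg p).
Proof.
rewrite -(pair_bigA _ (fun S j => ilen (load_interval s r e sg (S, j)))).
rewrite /load big_mkcond /=; apply: eq_bigr => S _; rewrite /ymoat.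
have ilen00 : ilen (0, 0) = 0 :> R by rewrite /ilen /= subrr maxxx.
case cross_eS: (crosses ends e S).
  by apply: eq_bigr => j _; rewrite /load_interval /= cross_eS; case: (is_comp _ _ _).
by rewrite big1 // => j _; rewrite /load_interval /= cross_eS.
Qed.

Lemma covers_load_interval s r e sg S (j : 'I_(size r).+1) x :
  path <=%R 0 [seq p.2 | p <- r] ->
  ind (covers (load_interval s r e sg (S, j)) x) =
  ind [&& 0 <= x, x < sg, crosses ends e S,
          is_comp ends (forest_at r x) S & x < smax s S] *
  ind (in_piece (breakpoints r) j x).
Proof.
move=> bp_sorted; rewrite /load_interval /covers.
set lo := nth 0 _ j; set nxt := nth 0 _ j.+1; rewrite /=.
have size_bp : size (breakpoints r) = (size r).+1 by rewrite /= size_map.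
case: (boolP (in_piece (breakpoints r) j x)) => [x_j|not_x_j]; last first.
  rewrite mulr0; move: not_x_j; rewrite /in_piece size_bp -/lo -/nxt.
  case: ifP => _ /=; rewrite /ind ?le_lt_asym // negb_and negb_imply.
  case: (leP lo x) => //= lo_x /andP[lt_j1 x_nxt].
  by rewrite lt_j1 !lt_min (negbTE x_nxt) !andbF.
rewrite (forest_at_piece bp_sorted (ltn_ord j) x_j) mulr1.
have lo_ge0 : 0 <= lo by apply: (breakpoint_ge0 bp_sorted); rewrite mem_nth ?size_bp.
move: x_j; rewrite /in_piece size_bp -/lo -/nxt => /andP[lo_x x_hi].
rewrite (le_trans lo_ge0 lo_x).
case: (crosses _ _ _); case: (is_comp _ _ _) => /=; rewrite ?le_lt_asym ?andbF //.
by rewrite lo_x; case: ifP x_hi => _ /= x_hi; rewrite !lt_min ?x_hi ?andbT // andbC.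
Qed.

Lemma count_load_intervals s r e sg x : path <=%R 0 [seq p.2 | p <- r] ->
  \sum_p ind (covers (load_interval s r e sg p) x) =
  \sum_S ind [&& 0 <= x, x < sg, crosses ends e S,
                 is_comp ends (forest_at r x) S & x < smax s S].
Proof.
move=> bp_sorted; rewrite -(pair_bigA _ (fun S j =>
  ind (covers (load_interval s r e sg (S, j)) x))).
apply: eq_bigr => S _; under eq_bigr do rewrite covers_load_interval //.
rewrite -mulr_sumr -(big_mkord xpredT (fun j => ind (in_piece _ j x))).
have := sum_ind_in_piece x bp_sorted; rewrite /= size_map => ->.
by rewrite /ind; case: (leP 0 x) => _ /=; rewrite ?mulr1 ?mulr0.
Qed.

End LoadAsLength.

Section Components.
Variables (V E : finType) (ends : E -> V * V).
Implicit Types (F : seq E) (S : {set V}).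

Lemma adj_sym F : symmetric (adj ends F).
Proof. by move=> a b; apply: eq_has => e /=; rewrite orbC. Qed.

Lemma connect_adj_sym F : connect_sym (adj ends F).
Proof. exact/sym_connect_sym/adj_sym. Qed.

Lemma mem_comp_of F v : v \in comp_of ends F v.
Proof. by rewrite inE connect0. Qed.

Lemma comp_of_connect F a b :
  connect (adj ends F) a b -> comp_of ends F a = comp_of ends F b.
Proof.
by move=> ab; apply/setP => z; rewrite !inE (same_connect (connect_adj_sym F) ab).
Qed.

Lemma is_comp_crossesP F e S : is_comp ends F S -> crosses ends e S ->
  S = comp_of ends F (ends e).1 \/ S = comp_of ends F (ends e).2.
Proof.
case/existsP=> w /eqP ->; rewrite /crosses !inE.
case wu: (connect _ w _); case wv: (connect _ w _) => // _.
  by left; apply: comp_of_connect.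
by right; apply: comp_of_connect.
Qed.

Lemma connect_sub_edges F F' :
  (forall e, e \in F -> connect (adj ends F') (ends e).1 (ends e).2) ->
  subrel (connect (adj ends F)) (connect (adj ends F')).
Proof.
move=> conn_F; apply: connect_sub => a b /hasP[e eF /orP[]/andP[/eqP<- /eqP<-]].
  exact: conn_F.
by rewrite connect_adj_sym; apply: conn_F.
Qed.

Lemma connect_adj_subset F F' : {subset F <= F'} ->
  subrel (connect (adj ends F)) (connect (adj ends F')).
Proof.
move=> sub_FF'; apply: connect_sub_edges => e eF; apply: connect1.
by apply/hasP; exists e; rewrite ?sub_FF' ?eqxx.
Qed.

Lemma comp_of_subset F F' v :
  subrel (connect (adj ends F)) (connect (adj ends F')) ->
  comp_of ends F v \subset comp_of ends F' v.
Proof. by move=> sub_FF'; apply/subsetP => z; rewrite !inE => /sub_FF'. Qed.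

Lemma forest_at_subset (R : realFieldType) (r : seq (E * R)) y z : y <= z ->
  {subset forest_at r y <= forest_at r z}.
Proof.
move=> le_yz e /mapP[p]; rewrite mem_filter => /andP[le_py pr] ->.
by rewrite map_f // mem_filter pr (le_trans le_py le_yz).
Qed.

End Components.

Section CrossingComponents.
Variables (R : realFieldType) (V E : finType) (ends : E -> V * V).
Variables (F : seq E) (e : E) (Q : pred {set V}).
Local Notation ind := (@ind R).
Local Notation A := (comp_of ends F (ends e).1).
Local Notation B := (comp_of ends F (ends e).2).

Lemma sum_crossing_comps_le :
  \sum_(S : {set V}) ind [&& crosses ends e S, is_comp ends F S & Q S]
  <= ind (Q A) + ind (Q B).
Proof.
have sum_eq1 (C : {set V}) : \sum_(S : {set V}) ind (S == C) = 1.
  by rewrite (bigD1 C) //= big1 ?addr0 /ind ?eqxx // => S /negbTE ->.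
apply: (@le_trans _ _ (\sum_(S : {set V})
           (ind (S == A) * ind (Q A) + ind (S == B) * ind (Q B)))); last first.
  by rewrite big_split /= -!mulr_suml !sum_eq1 !mul1r.
apply: ler_sum => S _; rewrite /ind.
case cross_S: (crosses _ _ _); case comp_S: (is_comp _ _ _) => /=;
  try by case: (S == A); case: (S == B); case: (Q A); case: (Q B); lra.
case: (is_comp_crossesP comp_S cross_S) => ->; rewrite eqxx /=;
  by case: (A == B); case: (B == A); case: (Q A); case: (Q B); lra.
Qed.

Lemma sum_crossing_comps_ge :
  ~~ connect (adj ends F) (ends e).1 (ends e).2 ->
  ind (Q A) + ind (Q B)
  <= \sum_(S : {set V}) ind [&& crosses ends e S, is_comp ends F S & Q S].
Proof.
move=> not_conn.
have v_notin_A : (ends e).2 \notin A by rewrite inE.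
have u_notin_B : (ends e).1 \notin B by rewrite inE connect_adj_sym.
have neq_BA : B != A by apply: contraNneq v_notin_A => <-; apply: mem_comp_of.
have cross_A : crosses ends e A by rewrite /crosses mem_comp_of (negbTE v_notin_A).
have cross_B : crosses ends e B by rewrite /crosses mem_comp_of (negbTE u_notin_B).
have comp_A : is_comp ends F A by apply/existsP; exists (ends e).1.
have comp_B : is_comp ends F B by apply/existsP; exists (ends e).2.
rewrite (bigD1 A) //= (bigD1 B) //= cross_A comp_A cross_B comp_B addrA lerDl.
by apply: sumr_ge0 => S _; apply: ind_ge0.
Qed.

End CrossingComponents.

Section MaxThreshold.
Variables (R : realFieldType) (V : finType).
Implicit Types (s : V -> R) (A B : {set V}).

Lemma smax_gtP s A x : 0 <= x -> reflect (exists2 w, w \in A & x < s w) (x < smax s A).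
Proof.
move=> x_ge0; apply: (iffP idP) => [|[w wA lt_xw]]; last first.
  by apply: lt_le_trans lt_xw _; apply: (le_bigmax_cond _ s wA).
rewrite /smax; elim/big_rec: _ => [|w m wA IH]; first by rewrite ltNge x_ge0.
by rewrite lt_max => /orP[lt_xw|/IH//]; exists w.
Qed.

Lemma smax_homo s s' A B x : 0 <= x -> (forall v, s v <= s' v) -> A \subset B ->
  x < smax s A -> x < smax s' B.
Proof.
move=> x_ge0 le_ss' /subsetP sub_AB /(smax_gtP _ _ x_ge0)[w wA lt_xw].
by apply/(smax_gtP _ _ x_ge0); exists w; rewrite ?sub_AB ?(lt_le_trans lt_xw).
Qed.

End MaxThreshold.

Section Comparison.
Variables (R : realFieldType) (V E : finType) (ends : E -> V * V) (c : E -> R).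
Variables (so sb : V -> R) (ro rb : seq (E * R)).
Hypothesis le_so_sb : forall v, so v <= sb v.
Hypothesis times_ro : path <=%R 0 [seq p.2 | p <- ro].
Hypothesis times_rb : path <=%R 0 [seq p.2 | p <- rb].
Hypothesis tight_ro : forall r1 e te r2, ro = r1 ++ (e, te) :: r2 ->
  load ends so ro e te = c e.
Hypothesis slack_rb : forall sigma, 0 <= sigma -> (exists w, sigma < sb w) ->
  forall e, ~~ connect (adj ends (forest_at rb sigma)) (ends e).1 (ends e).2 ->
  load ends sb rb e sigma < c e.

Lemma connect_forest_finer x :
  (forall p, p \in ro -> p.2 <= x ->
     connect (adj ends (forest_at rb p.2)) (ends p.1).1 (ends p.1).2) ->
  subrel (connect (adj ends (forest_at ro x))) (connect (adj ends (forest_at rb x))).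
Proof.
move=> conn_ro; apply: connect_sub_edges => e /mapP[p]; rewrite mem_filter.
case/andP=> le_px pro ->.
exact: connect_adj_subset (forest_at_subset le_px) _ _ (conn_ro p pro le_px).
Qed.

(* At each time before [te], each component of [ro] crossing [e] lies in a
   distinct component of [rb] crossing [e] which is active whenever it is. *)
Lemma load_le_finer e te :
  (forall x, x < te ->
     subrel (connect (adj ends (forest_at ro x))) (connect (adj ends (forest_at rb x)))) ->
  ~~ connect (adj ends (forest_at rb te)) (ends e).1 (ends e).2 ->
  load ends so ro e te <= load ends sb rb e te.
Proof.
move=> finer not_conn; rewrite !load_sum_ilen; apply: ler_sum_ilen => x.
rewrite !count_load_intervals //.
have [/andP[x_ge0 lt_xte]|x_out] := boolP ((0 <= x) && (x < te)); last first.
  rewrite big1 ?sumr_ge0 // => [S _|S _]; first exact: ind_ge0.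
  by case/nandP: x_out => /negbTE ->; rewrite ?andbF.
under eq_bigr do rewrite x_ge0 lt_xte /=.
under [X in _ <= X]eq_bigr do rewrite x_ge0 lt_xte /=.
apply: le_trans (sum_crossing_comps_le _ _ _ _ (fun S => x < smax so S)) _.
have not_conn_x : ~~ connect (adj ends (forest_at rb x)) (ends e).1 (ends e).2.
  by apply: contra not_conn; apply: connect_adj_subset; exact/forest_at_subset/ltW.
apply: le_trans _ (sum_crossing_comps_ge _ (fun S => x < smax sb S) not_conn_x).
have comp_sub v := comp_of_subset v (finer x lt_xte).
by rewrite lerD // ler_ind // => /smax_homo; apply.
Qed.

Lemma added_edge_connected n r1 e te r2 :
  (size r1 < n)%N -> ro = r1 ++ (e, te) :: r2 -> (exists w, te < so w) ->
  connect (adj ends (forest_at rb te)) (ends e).1 (ends e).2.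
Proof.
elim: n r1 e te r2 => [|n IH] r1 e te r2 //= lt_r1n ro_split [w lt_tew].
have te_ge0 : 0 <= te.
  by apply: (breakpoint_ge0 times_ro); rewrite inE ro_split map_cat mem_cat inE eqxx !orbT.
have le_te_r2 p : p \in r2 -> te <= p.2.
  have : sorted <=%R [seq q.2 | q <- (e, te) :: r2].
    by move: (path_sorted times_ro); rewrite ro_split map_cat => /cat_sorted2[].
  by move=> /(order_path_min le_trans)/allP le_te p_r2; apply/le_te/map_f.
have finer y : y < te ->
    subrel (connect (adj ends (forest_at ro y))) (connect (adj ends (forest_at rb y))).
  move=> lt_yte; apply: connect_forest_finer => p; rewrite ro_split mem_cat inE.
  case/or3P=> [p_r1|/eqP-> /=|p_r2] le_py; last first.
  - by move: (le_trans (le_te_r2 p p_r2) le_py); rewrite leNgt lt_yte.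
  - by move: (le_lt_trans le_py lt_yte); rewrite ltxx.
  case/splitPr: p_r1 ro_split lt_r1n => r11 r12 ro_split lt_r1n.
  apply: (IH r11 p.1 p.2 (r12 ++ (e, te) :: r2)).
  - by rewrite size_cat /= addnS ltnS in lt_r1n; exact: leq_ltn_trans (leq_addr _ _) lt_r1n.
  - by rewrite ro_split -catA -surjective_pairing.
  - by exists w; apply: le_lt_trans le_py (lt_trans lt_yte lt_tew).
apply/negPn/negP => not_conn.
have active_te : exists w, te < sb w by exists w; apply: lt_le_trans lt_tew _.
have := load_le_finer finer not_conn.
by rewrite (tight_ro ro_split) leNgt slack_rb.
Qed.

Lemma connect_forest_active x : (exists w, x < so w) ->
  subrel (connect (adj ends (forest_at ro x))) (connect (adj ends (forest_at rb x))).
Proof.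
move=> [w lt_xw]; apply: connect_forest_finer => p p_ro le_px.
case/splitPr def_ro: {1}ro / p_ro => [r1 r2].
apply: (added_edge_connected (n := (size r1).+1) (r1 := r1) (r2 := r2)) => //.
  by rewrite def_ro -surjective_pairing.
by exists w; apply: le_lt_trans le_px lt_xw.
Qed.

End Comparison.

Lemma withBoost_ge (R : realFieldType) (V : finType) (tstar : V -> R) q tau :
  tstar q <= tau -> forall v, tstar v <= withBoost tstar q tau v.
Proof. by move=> le_tq v; rewrite /withBoost; case: eqP => [->|]. Qed.

Theorem mainTheorem15 (R : realFieldType) (V E : finType) (ends : E -> V * V)
    (c : E -> R) (t tstar : V -> R) (q : V) (tau tau0 : R)
    (r_boost r_orig : seq (E * R)) (S : {set V}) :
  (forall e, 0 <= c e) ->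
  (forall v, 0 <= t v) ->
  (forall v, t v <= tstar v) ->
  tstar q <= tau ->
  0 <= tau0 ->
  moat_run ends c (withBoost tstar q tau) r_boost ->
  moat_run ends c tstar r_orig ->
  active_comp ends (withBoost tstar q tau) r_boost tau0 S ->
  (q \notin S \/ tau <= tau0) ->
  exists2 S' : {set V}, active_comp ends tstar r_orig tau0 S' & S' \subset S.
Proof.
move=> _ _ _ le_tq _ [times_b _ slack_b] [times_o added_o _]
       [comp_S [w wS lt_w]] q_out_or_late.
have active_w : tau0 < tstar w.
  move: lt_w; rewrite /withBoost; case: eqP => [eq_wq|//].
  case: q_out_or_late => [|le_tau]; first by rewrite -eq_wq wS.
  by rewrite ltNge le_tau.
have tight_o r1 e te r2 : r_orig = r1 ++ (e, te) :: r2 -> load ends tstar r_orig e te = c e.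
  by case/added_o.
have finer := connect_forest_active (withBoost_ge le_tq) times_o times_b tight_o slack_b
                (ex_intro _ w active_w).
exists (comp_of ends (forest_at r_orig tau0) w).
  by split; [apply/existsP; exists w | exists w; rewrite ?mem_comp_of].
case/existsP: comp_S wS => w0 /eqP ->; rewrite inE => /comp_of_connect ->.
exact: comp_of_subset.
Qed.
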